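(* Let $n \ge 1$, let $F$ be an $n$-perturbation on $H^2(\mathbb{D})$ and $S_n = M_z + F$. If $\mathcal{M} \subseteq H^2(\mathbb{D})$ is a nonzero closed subspace with $S_n\mathcal{M}\subseteq\mathcal{M}$, then $\dim(\mathcal{M} \ominus S_n \mathcal{M}) = 1$.
   Context: $H^2(\mathbb{D})$ is the Hardy space on the open unit disc and $M_z$ the unilateral shift on it. All operators are bounded. A linear operator $F$ on $H^2(\mathbb{D})$ is an $n$-perturbation if (a) $Fz^m = 0$ for all $m \ge n$; (b) $F(z^m H^2(\mathbb{D})) \subseteq z^{m+1}\mathbb{C}[z]$ for all $m \ge 0$; and (c) $M_z + F$ is left-invertible. *)

(* H^2(D) is modelled, via the unitary
   Taylor-coefficient map f = sum a_k z^k  |->  (a_k)_k, as l^2(N) over C. *)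
From Stdlib Require Import Reals.
From Coquelicot Require Import Coquelicot.
Open Scope R_scope.

Definition seqC := nat -> C.

Definition zeroC : seqC := fun _ => RtoC 0.

Definition inH2 (a : seqC) : Prop := ex_series (fun k => (Cmod (a k)) ^ 2).

Definition h2norm (a : seqC) : R := sqrt (Series (fun k => (Cmod (a k)) ^ 2)).

Definition addS (a b : seqC) : seqC := fun k => Cplus (a k) (b k).
Definition subS (a b : seqC) : seqC := fun k => Cminus (a k) (b k).
Definition scaleS (c : C) (a : seqC) : seqC := fun k => Cmult c (a k).

Definition orth (a b : seqC) : Prop :=
  Series (fun k => Re (Cmult (a k) (Cconj (b k)))) = 0 /\
  Series (fun k => Im (Cmult (a k) (Cconj (b k)))) = 0.

Definition zpow (m : nat) : seqC := fun k => if Nat.eqb k m then RtoC 1 else RtoC 0.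

Definition Mz (a : seqC) : seqC :=
  fun k => match k with O => RtoC 0 | S k' => a k' end.

(* bounded linear operator on H^2 (values outside H^2 are irrelevant) *)
Definition bounded_op (T : seqC -> seqC) : Prop :=
  (forall a, inH2 a -> inH2 (T a)) /\
  (forall a b, inH2 a -> inH2 b -> T (addS a b) = addS (T a) (T b)) /\
  (forall c a, inH2 a -> T (scaleS c a) = scaleS c (T a)) /\
  (exists K, 0 <= K /\ forall a, inH2 a -> h2norm (T a) <= K * h2norm a).

Definition opadd (T U : seqC -> seqC) : seqC -> seqC := fun a => addS (T a) (U a).

Definition left_invertible (T : seqC -> seqC) : Prop :=
  exists L, bounded_op L /\ forall a, inH2 a -> L (T a) = a.

Definition in_zmH2 (m : nat) (a : seqC) : Prop :=
  inH2 a /\ forall k, (k < m)%nat -> a k = RtoC 0.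

Definition in_zm1poly (m : nat) (a : seqC) : Prop :=
  (forall k, (k <= m)%nat -> a k = RtoC 0) /\
  exists N, forall k, (N <= k)%nat -> a k = RtoC 0.

Definition n_perturbation (n : nat) (F : seqC -> seqC) : Prop :=
  bounded_op F /\
  (forall m, (n <= m)%nat -> F (zpow m) = zeroC) /\
  (forall m a, in_zmH2 m a -> in_zm1poly m (F a)) /\
  left_invertible (opadd Mz F).

Definition closed_subspace (M : seqC -> Prop) : Prop :=
  (forall a, M a -> inH2 a) /\
  M zeroC /\
  (forall a b, M a -> M b -> M (addS a b)) /\
  (forall c a, M a -> M (scaleS c a)) /\
  (forall (u : nat -> seqC) a, (forall j, M (u j)) -> inH2 a ->
     is_lim_seq (fun j => h2norm (subS (u j) a)) 0 -> M a).

(* M ⊖ T M = M ∩ (T M)^⊥ *)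
Definition wandering (T : seqC -> seqC) (M : seqC -> Prop) (u : seqC) : Prop :=
  M u /\ forall w, M w -> orth u (T w).

Definition dim_one (W : seqC -> Prop) : Prop :=
  exists v, W v /\ v <> zeroC /\ forall u, W u -> exists c : C, u = scaleS c v.

(* S = M_z + F is lower triangular: it maps z^m H^2 into z^(m+1) H^2, multiplying the leading
   coefficient by the subdiagonal entry 1 + <F z^m, z^(m+1)>, and it agrees with M_z on z^n H^2
   since F is bounded and kills z^k for k >= n. Injectivity of S makes every subdiagonal entry
   nonzero. Let m0 be the order of M; then M has monic elements of every order >= m0. On the
   z-invariant subspace M ∩ z^(m0+n) H^2, whose wandering subspace is at most a line (an
   orthonormal pair of wandering vectors would violate Bessel's inequality coefficientwise),
   a vanishing leading coefficient is the only obstruction to dividing by z. Eliminating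
   coefficients from the top down then gives S M = {g ∈ M : g_m0 = 0}, a closed hyperplane of M,
   so M ⊖ S M is a line. *)

From Stdlib Require Import Reals Lra Lia Wf_nat FunctionalExtensionality ClassicalEpsilon Classical List.
From Coquelicot Require Import Coquelicot.
Import ListNotations.
Open Scope R_scope.

(** * Partial sums and series *)

Fixpoint psum (f : nat -> R) (N : nat) : R :=
  match N with O => 0 | S N' => psum f N' + f N' end.

Lemma psum_sum_n f N : psum f (S N) = sum_n f N.
Proof.
  rewrite sum_n_Reals. induction N as [|N IH]; simpl in *; [lra|].
  rewrite <- IH. lra.
Qed.

Lemma psum_ext f g N : (forall k, (k < N)%nat -> f k = g k) -> psum f N = psum g N.
Proof. induction N; intros H; simpl; [lra|]. rewrite IHN, H; auto; lra. Qed.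

Lemma psum_nonneg f N : (forall k, 0 <= f k) -> 0 <= psum f N.
Proof. intros H; induction N; simpl; [lra|]. specialize (H N). lra. Qed.

Lemma psum_le_mono f N N' : (forall k, 0 <= f k) -> (N <= N')%nat -> psum f N <= psum f N'.
Proof. intros H Hle; induction Hle; simpl; [lra|]. specialize (H m). lra. Qed.

Lemma psum_plus f g N : psum (fun k => f k + g k) N = psum f N + psum g N.
Proof. induction N; simpl; lra. Qed.

Lemma psum_le f g N : (forall k, (k < N)%nat -> f k <= g k) -> psum f N <= psum g N.
Proof.
  induction N; intros H; simpl; [lra|].
  pose proof (H N (Nat.lt_succ_diag_r N)). assert (psum f N <= psum g N) by (apply IHN; auto). lra.
Qed.

Lemma psum_shift f N : psum f (S N) = f O + psum (fun k => f (S k)) N.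
Proof. induction N; simpl in *; [lra|]. rewrite IHN. lra. Qed.

Lemma psum_eq0 f N : (forall k, (k < N)%nat -> f k = 0) -> psum f N = 0.
Proof. induction N; simpl; intros H; auto. rewrite IHN, H; auto; lra. Qed.

Lemma psum_const c N : psum (fun _ => c) N = c * INR N.
Proof. induction N; simpl psum; [simpl; ring|]. rewrite IHN, S_INR. ring. Qed.

Lemma is_lim_seq_psum f : ex_series f -> is_lim_seq (psum f) (Series f).
Proof.
  intros H. apply Series_correct in H.
  apply is_lim_seq_incr_1. eapply is_lim_seq_ext; [|exact H].
  intros N. symmetry. apply psum_sum_n.
Qed.

Lemma Series_zero : Series (fun _ => 0) = 0.
Proof.
  rewrite (Series_ext _ (fun n => 0 * 0)) by (intros; ring).
  rewrite Series_scal_l. ring.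
Qed.

Lemma is_series_finsupp f T : (forall k, (T <= k)%nat -> f k = 0) -> is_series f (psum f T).
Proof.
  intros H. apply is_series_Reals. intros eps Heps.
  exists T. intros m Hm. unfold R_dist.
  assert (E : sum_f_R0 f m = psum f T).
  { rewrite <- sum_n_Reals, <- psum_sum_n. assert (Hm' : (T <= S m)%nat) by lia.
    induction Hm'; [reflexivity|]. simpl. rewrite H by lia. lra. }
  rewrite E, Rminus_diag, Rabs_R0. exact Heps.
Qed.

Lemma ex_series_finsupp f T : (forall k, (T <= k)%nat -> f k = 0) -> ex_series f.
Proof. intros H. eexists. apply (is_series_finsupp f T H). Qed.

Lemma Series_finsupp f T : (forall k, (T <= k)%nat -> f k = 0) -> Series f = psum f T.
Proof. intros H. apply is_series_unique, is_series_finsupp, H. Qed.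

Lemma Series_nonneg f : ex_series f -> (forall k, 0 <= f k) -> 0 <= Series f.
Proof.
  intros He H. rewrite <- Series_zero. apply Series_le; auto. intros; split; [lra|auto].
Qed.

Lemma psum_le_Series f N : ex_series f -> (forall k, 0 <= f k) -> psum f N <= Series f.
Proof.
  intros He H. destruct N as [|N]; [apply Series_nonneg; auto|].
  rewrite (Series_incr_n f (S N)) by (auto; lia). rewrite psum_sum_n, sum_n_Reals. simpl.
  assert (0 <= Series (fun k => f (S (N + k)))).
  { apply Series_nonneg; auto. exact (proj1 (ex_series_incr_n f (S N)) He). }
  lra.
Qed.

Lemma ex_series_psum_bounded f B : (forall k, 0 <= f k) -> (forall N, psum f N <= B) ->
  ex_series f /\ Series f <= B.
Proof.
  intros Hp HB.
  destruct (growing_cv (sum_f_R0 f)) as [l Hl].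
  { intros N. simpl. specialize (Hp (S N)). lra. }
  { exists B. intros x [N ->]. rewrite <- sum_n_Reals, <- psum_sum_n. apply HB. }
  assert (Hs : is_series f l) by (apply is_series_Reals; exact Hl).
  split; [eexists; eauto|].
  rewrite (is_series_unique _ _ Hs).
  destruct (Rle_dec l B) as [|Hn]; auto. exfalso.
  destruct (Hl (l - B)) as [N HN]; [lra|].
  specialize (HN N (le_n N)). specialize (HB (S N)). rewrite psum_sum_n, sum_n_Reals in HB.
  unfold R_dist in HN. apply Rabs_def2 in HN. lra.
Qed.

Lemma Series_nonpos_terms f : ex_series f -> (forall k, 0 <= f k) -> Series f <= 0 ->
  forall k, f k = 0.
Proof.
  intros He Hp H0 k. pose proof (psum_le_Series f (S k) He Hp). simpl in H.
  pose proof (psum_nonneg f k Hp). specialize (Hp k). lra.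
Qed.

Lemma ex_series_dom f g : (forall k, 0 <= f k <= g k) -> ex_series g -> ex_series f.
Proof.
  intros H Hg. apply (ex_series_le f g); auto. intros k.
  change (norm (f k)) with (Rabs (f k)). rewrite Rabs_pos_eq; apply H.
Qed.

Lemma ex_series_lin f g a b : ex_series f -> ex_series g -> ex_series (fun k => a * f k + b * g k).
Proof.
  intros Hf Hg. apply (ex_series_scal_l a) in Hf. apply (ex_series_scal_l b) in Hg.
  exact (ex_series_plus _ _ Hf Hg).
Qed.

Lemma Series_lin f g a b : ex_series f -> ex_series g ->
  Series (fun k => a * f k + b * g k) = a * Series f + b * Series g.
Proof.
  intros Hf Hg. rewrite Series_plus, !Series_scal_l; auto.
  - exact (ex_series_scal_l a _ Hf).
  - exact (ex_series_scal_l b _ Hg).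
Qed.

Lemma Series_lin3 f g h a b c : ex_series f -> ex_series g -> ex_series h ->
  Series (fun k => a * f k + b * g k + c * h k) = a * Series f + b * Series g + c * Series h.
Proof.
  intros. rewrite (Series_ext _ (fun k => 1 * (a * f k + b * g k) + c * h k)) by (intros; ring).
  rewrite !Series_lin; auto using ex_series_lin. ring.
Qed.
(** * The real geometry of H^2 *)

Definition abs2 (a : seqC) (k : nat) : R := Cmod (a k) ^ 2.
Definition norm2 (a : seqC) : R := Series (abs2 a).
Definition rprod (a b : seqC) (k : nat) : R := fst (a k) * fst (b k) + snd (a k) * snd (b k).
(* Real part of the H^2 inner product; complex orthogonality to [b] is real orthogonality
   to [b] and to [imul b]. *)
Definition rinner (a b : seqC) : R := Series (rprod a b).
Definition imul : seqC -> seqC := scaleS (0, 1).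
Definition bshift (a : seqC) : seqC := fun k => a (S k).

Ltac coef_unfold :=
  unfold abs2, rprod in *; rewrite ?Cmod2_alt in *;
  unfold Re, Im, addS, subS, scaleS, imul, bshift, zeroC, Cminus, Cplus, Copp, Cmult, RtoC in *;
  simpl in *.

Ltac coef_ring := intros; coef_unfold; ring.

Lemma C_ext (z w : C) : fst z = fst w -> snd z = snd w -> z = w.
Proof. destruct z, w; simpl; intros -> ->; reflexivity. Qed.

Ltac seq_ring := apply functional_extensionality; intros; apply C_ext; coef_ring.

Lemma subS_eq0 a b : subS a b = zeroC -> a = b.
Proof.
  intros E. apply functional_extensionality; intros k. assert (Ek := f_equal (fun v => v k) E).
  apply C_ext; coef_unfold; injection Ek as E1 E2; lra.
Qed.

Lemma abs2_nonneg a k : 0 <= abs2 a k.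
Proof. coef_unfold. nra. Qed.

Lemma abs2_eq0 a k : abs2 a k = 0 -> a k = RtoC 0.
Proof. coef_unfold. intros H. apply C_ext; simpl; nra. Qed.

Lemma inH2_ext a b : (forall k, abs2 a k = abs2 b k) -> inH2 a -> inH2 b.
Proof. apply ex_series_ext. Qed.

Lemma inH2_zero : inH2 zeroC.
Proof. apply (ex_series_finsupp _ 0). coef_ring. Qed.

Lemma inH2_add a b : inH2 a -> inH2 b -> inH2 (addS a b).
Proof.
  intros Ha Hb. apply (ex_series_dom _ (fun k => 2 * abs2 a k + 2 * abs2 b k)).
  - intros k; split; [apply abs2_nonneg|]. coef_unfold.
    pose proof (pow2_ge_0 (fst (a k) - fst (b k))). pose proof (pow2_ge_0 (snd (a k) - snd (b k))). nra.
  - apply ex_series_lin; auto.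
Qed.

Lemma inH2_scale c a : inH2 a -> inH2 (scaleS c a).
Proof.
  intros Ha. apply (ex_series_ext (fun k => Cmod c ^ 2 * abs2 a k + 0 * abs2 a k)).
  - intros k. rewrite Cmod2_alt. coef_ring.
  - apply ex_series_lin; auto.
Qed.

Lemma inH2_sub a b : inH2 a -> inH2 b -> inH2 (subS a b).
Proof.
  intros Ha Hb. apply (inH2_ext (addS a (scaleS (RtoC (-1)) b))); [coef_ring|].
  auto using inH2_add, inH2_scale.
Qed.

Lemma inH2_imul a : inH2 a -> inH2 (imul a).
Proof. apply inH2_scale. Qed.

Lemma inH2_Mz a : inH2 a -> inH2 (Mz a).
Proof. intros Ha. apply ex_series_incr_1. exact Ha. Qed.

Lemma inH2_bshift a : inH2 a -> inH2 (bshift a).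
Proof. intros Ha. exact (proj1 (ex_series_incr_1 _) Ha). Qed.

Lemma zpow_neq k m : k <> m -> zpow m k = RtoC 0.
Proof. unfold zpow. destruct (Nat.eqb_spec k m); [lia|auto]. Qed.

Lemma zpow_eq m : zpow m m = RtoC 1.
Proof. unfold zpow. rewrite Nat.eqb_refl. reflexivity. Qed.

Definition vanishes_below (m : nat) (a : seqC) : Prop := forall k, (k < m)%nat -> a k = RtoC 0.

Lemma vanishes_below_zpow m : vanishes_below m (zpow m).
Proof. intros k Hk. apply zpow_neq. lia. Qed.

Lemma exists_order (X : seqC -> Prop) : (exists a, X a /\ a <> zeroC) ->
  exists m, (forall a, X a -> vanishes_below m a) /\ exists a, X a /\ a m <> RtoC 0.
Proof.
  intros [a0 [Xa0 Ha0]]. set (P := fun k => exists a, X a /\ a k <> RtoC 0).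
  destruct (dec_inh_nat_subset_has_unique_least_element P) as [m [[Pm Hmin] _]].
  - intros k. apply classic.
  - apply NNPP. intros Hn. apply Ha0, functional_extensionality. intros k.
    apply NNPP. intros Hk. apply Hn. exists k, a0. auto.
  - exists m. split; auto. intros a Xa k Hk. apply NNPP. intros Hak.
    specialize (Hmin k (ex_intro _ a (conj Xa Hak))). lia.
Qed.

Lemma inH2_zpow m : inH2 (zpow m).
Proof.
  apply (ex_series_finsupp _ (S m)). intros k Hk. unfold abs2.
  rewrite zpow_neq by lia. rewrite Cmod_0. ring.
Qed.

Lemma norm2_ext a b : (forall k, abs2 a k = abs2 b k) -> norm2 a = norm2 b.
Proof. apply Series_ext. Qed.

Lemma norm2_nonneg a : inH2 a -> 0 <= norm2 a.
Proof. intros H. apply Series_nonneg; auto using abs2_nonneg. Qed.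

Lemma norm2_eq0 a : inH2 a -> norm2 a <= 0 -> a = zeroC.
Proof.
  intros H H0. apply functional_extensionality; intros k.
  apply abs2_eq0, (Series_nonpos_terms (abs2 a)); auto using abs2_nonneg.
Qed.

Lemma abs2_le_norm2 a k : inH2 a -> abs2 a k <= norm2 a.
Proof.
  intros H. pose proof (psum_le_Series (abs2 a) (S k) H (abs2_nonneg a)). simpl in H0.
  pose proof (psum_nonneg (abs2 a) k (abs2_nonneg a)). unfold norm2. lra.
Qed.

Lemma ex_series_rprod a b : inH2 a -> inH2 b -> ex_series (rprod a b).
Proof.
  intros Ha Hb.
  apply (@ex_series_le R_AbsRing R_CompleteNormedModule _ (fun k => /2 * abs2 a k + /2 * abs2 b k)).
  - intros k. change (norm (rprod a b k)) with (Rabs (rprod a b k)). apply Rabs_le. coef_unfold.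
    pose proof (pow2_ge_0 (fst (a k) - fst (b k))). pose proof (pow2_ge_0 (snd (a k) - snd (b k))).
    pose proof (pow2_ge_0 (fst (a k) + fst (b k))). pose proof (pow2_ge_0 (snd (a k) + snd (b k))).
    split; nra.
  - apply ex_series_lin; auto.
Qed.

Lemma rinner_self a : rinner a a = norm2 a.
Proof. apply Series_ext. coef_ring. Qed.

Lemma rinner_sym a b : rinner a b = rinner b a.
Proof. apply Series_ext. coef_ring. Qed.

Lemma rinner_lin_l a b c x y : inH2 a -> inH2 b -> inH2 c ->
  rinner (fun k => addS (scaleS (RtoC x) a) (scaleS (RtoC y) b) k) c = x * rinner a c + y * rinner b c.
Proof.
  intros. unfold rinner. rewrite <- Series_lin by (apply ex_series_rprod; auto).
  apply Series_ext. coef_ring.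
Qed.

Lemma rinner_add_l a b c : inH2 a -> inH2 b -> inH2 c -> rinner (addS a b) c = rinner a c + rinner b c.
Proof.
  intros. rewrite <- (Rmult_1_l (rinner a c)), <- (Rmult_1_l (rinner b c)), <- rinner_lin_l by auto.
  apply Series_ext. coef_ring.
Qed.

Lemma rinner_sub_l a b c : inH2 a -> inH2 b -> inH2 c -> rinner (subS a b) c = rinner a c - rinner b c.
Proof.
  intros. replace (rinner a c - rinner b c) with (1 * rinner a c + (-1) * rinner b c) by ring.
  rewrite <- rinner_lin_l by auto. apply Series_ext. coef_ring.
Qed.

Lemma rinner_real_l t a b : inH2 a -> inH2 b -> rinner (scaleS (RtoC t) a) b = t * rinner a b.
Proof.
  intros. replace (t * rinner a b) with (t * rinner a b + 0 * rinner a b) by ring.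
  rewrite <- rinner_lin_l by auto. apply Series_ext. coef_ring.
Qed.

Lemma rinner_real_r a t b : inH2 a -> inH2 b -> rinner a (scaleS (RtoC t) b) = t * rinner a b.
Proof. intros. rewrite rinner_sym, rinner_real_l, rinner_sym; auto. Qed.

Lemma rinner_scale_l z a b : inH2 a -> inH2 b ->
  rinner (scaleS z a) b = fst z * rinner a b + snd z * rinner (imul a) b.
Proof.
  intros. rewrite <- rinner_lin_l by auto using inH2_imul. apply Series_ext. coef_ring.
Qed.

Lemma rinner_imul_l a b : rinner (imul a) b = - rinner a (imul b).
Proof. unfold rinner. rewrite <- Series_opp. apply Series_ext. coef_ring. Qed.

Lemma rinner_imul_imul a b : rinner (imul a) (imul b) = rinner a b.
Proof. apply Series_ext. coef_ring. Qed.

Lemma rinner_imul_self a : rinner a (imul a) = 0.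
Proof. unfold rinner. rewrite <- Series_zero. apply Series_ext. coef_ring. Qed.

Lemma norm2_imul a : norm2 (imul a) = norm2 a.
Proof. apply norm2_ext. coef_ring. Qed.

Lemma norm2_add a b : inH2 a -> inH2 b -> norm2 (addS a b) = norm2 a + 2 * rinner a b + norm2 b.
Proof.
  intros Ha Hb. unfold norm2, rinner.
  rewrite (Series_ext _ (fun k => 1 * abs2 a k + 2 * rprod a b k + 1 * abs2 b k)) by coef_ring.
  rewrite Series_lin3; auto using ex_series_rprod. ring.
Qed.

Lemma norm2_sub a b : inH2 a -> inH2 b -> norm2 (subS a b) = norm2 a - 2 * rinner a b + norm2 b.
Proof.
  intros Ha Hb. unfold norm2, rinner.
  rewrite (Series_ext _ (fun k => 1 * abs2 a k + (-2) * rprod a b k + 1 * abs2 b k)) by coef_ring.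
  rewrite Series_lin3; auto using ex_series_rprod. ring.
Qed.

Lemma norm2_real t a : norm2 (scaleS (RtoC t) a) = t * t * norm2 a.
Proof. unfold norm2. rewrite <- Series_scal_l. apply Series_ext. coef_ring. Qed.

Lemma Cauchy_Schwarz a b : inH2 a -> inH2 b -> rinner a b * rinner a b <= norm2 a * norm2 b.
Proof.
  intros Ha Hb.
  assert (Hq : forall t, 0 <= norm2 a - 2 * t * rinner a b + t * t * norm2 b).
  { intros t. pose proof (norm2_nonneg _ (inH2_sub a (scaleS (RtoC t) b) Ha (inH2_scale _ _ Hb))).
    rewrite norm2_sub, norm2_real, rinner_real_r in H; auto using inH2_scale. lra. }
  pose proof (norm2_nonneg a Ha). pose proof (norm2_nonneg b Hb).
  destruct (Req_dec (norm2 b) 0) as [Hz|Hz].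
  - destruct (Req_dec (rinner a b) 0) as [E|Hn]; [rewrite E; nra|].
    specialize (Hq ((norm2 a + 1) / (2 * rinner a b))). rewrite Hz in Hq.
    replace (norm2 a - 2 * ((norm2 a + 1) / (2 * rinner a b)) * rinner a b
             + (norm2 a + 1) / (2 * rinner a b) * ((norm2 a + 1) / (2 * rinner a b)) * 0)
      with (-1) in Hq by (field; auto). lra.
  - specialize (Hq (rinner a b / norm2 b)).
    replace (norm2 a - 2 * (rinner a b / norm2 b) * rinner a b + rinner a b / norm2 b * (rinner a b / norm2 b) * norm2 b)
      with (norm2 a - rinner a b * rinner a b / norm2 b) in Hq by (field; auto).
    assert (Hp : 0 < norm2 b) by lra.
    apply (Rmult_le_compat_r (norm2 b)) in Hq; [|lra].
    replace ((norm2 a - rinner a b * rinner a b / norm2 b) * norm2 b)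
      with (norm2 a * norm2 b - rinner a b * rinner a b) in Hq by (field; lra). lra.
Qed.

Lemma Cauchy_Schwarz_abs a b : inH2 a -> inH2 b -> Rabs (rinner a b) <= h2norm a * h2norm b.
Proof.
  intros Ha Hb. unfold h2norm. fold (abs2 a) (abs2 b) (norm2 a) (norm2 b).
  rewrite <- sqrt_mult by (apply norm2_nonneg; auto).
  rewrite <- sqrt_Rsqr_abs. apply sqrt_le_1_alt. apply Cauchy_Schwarz; auto.
Qed.

Lemma orth_rinner a b : orth a b <-> rinner a b = 0 /\ rinner a (imul b) = 0.
Proof.
  unfold orth.
  rewrite (Series_ext (fun k => Re (Cmult (a k) (Cconj (b k)))) (rprod a b)) by (unfold Cconj; coef_ring).
  rewrite (Series_ext (fun k => Im (Cmult (a k) (Cconj (b k)))) (rprod a (imul b))) by (unfold Cconj; coef_ring).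
  reflexivity.
Qed.

(** * Completeness and orthogonal projection *)

Definition l2_cvg (u : nat -> seqC) (a : seqC) : Prop :=
  is_lim_seq (fun j => norm2 (subS (u j) a)) 0.

Lemma h2norm_sqrt a : h2norm a = sqrt (norm2 a).
Proof. reflexivity. Qed.

Lemma is_lim_seq_sqrt0 (v : nat -> R) : is_lim_seq v 0 -> is_lim_seq (fun j => sqrt (v j)) 0.
Proof.
  intros H. rewrite <- sqrt_0. apply is_lim_seq_continuous; auto.
  apply continuity_pt_sqrt. lra.
Qed.

Lemma l2_cvg_h2norm u a : (forall j, inH2 (subS (u j) a)) ->
  l2_cvg u a <-> is_lim_seq (fun j => h2norm (subS (u j) a)) 0.
Proof.
  intros Hh. split; [apply is_lim_seq_sqrt0|].
  intros H. pose proof (is_lim_seq_mult' _ _ _ _ H H) as Hsq. rewrite Rmult_0_l in Hsq.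
  eapply is_lim_seq_ext; [|exact Hsq]. intros j. simpl.
  rewrite h2norm_sqrt, sqrt_sqrt; auto using norm2_nonneg.
Qed.

Lemma inv_S_pos j : 0 < / INR (S j).
Proof. apply Rinv_0_lt_compat, lt_0_INR. lia. Qed.

Lemma is_lim_seq_inv_S : is_lim_seq (fun j => / INR (S j)) 0.
Proof.
  assert (H : is_lim_seq (fun j => INR (S j)) p_infty).
  { apply (is_lim_seq_incr_1 INR). apply is_lim_seq_INR. }
  apply (is_lim_seq_inv _ _ H). discriminate.
Qed.

Lemma is_lim_seq_ge_const (f : nat -> R) (L c : R) : (forall j, c <= f j) -> is_lim_seq f L -> c <= L.
Proof. intros H Hl. exact (is_lim_seq_le (fun _ => c) f c L H (is_lim_seq_const c) Hl). Qed.

Lemma is_lim_seq_le_const (f : nat -> R) (L c : R) : (forall j, f j <= c) -> is_lim_seq f L -> L <= c.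
Proof. intros H Hl. exact (is_lim_seq_le f (fun _ => c) L c H Hl (is_lim_seq_const c)). Qed.

Lemma l2_cvg_coef_eq0 u a k : (forall j, inH2 (u j)) -> inH2 a -> l2_cvg u a ->
  (forall j, u j k = RtoC 0) -> a k = RtoC 0.
Proof.
  intros Hu Ha Hc Hz. apply abs2_eq0, Rle_antisym; [|apply abs2_nonneg].
  refine (is_lim_seq_ge_const _ 0 _ _ Hc). intros j. simpl.
  replace (abs2 a k) with (abs2 (subS (u j) a) k) by (unfold abs2, subS; rewrite Hz; coef_ring).
  apply abs2_le_norm2, inH2_sub; auto.
Qed.

Lemma coef_abs_le_of_norm2 a eps : inH2 a -> 0 <= eps -> norm2 a <= eps * eps -> forall k,
  Rabs (fst (a k)) <= eps /\ Rabs (snd (a k)) <= eps.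
Proof.
  intros Ha He H k. pose proof (abs2_le_norm2 a k Ha) as Hk. coef_unfold.
  pose proof (pow2_ge_0 (fst (a k))). pose proof (pow2_ge_0 (snd (a k))).
  split; rewrite <- (Rabs_pos_eq eps) by lra; apply Rsqr_le_abs_0; unfold Rsqr; nra.
Qed.

Lemma is_lim_seq_abs2_sub (b a : seqC) (v : nat -> seqC) k :
  is_lim_seq (fun l => fst (v l k)) (fst (a k)) -> is_lim_seq (fun l => snd (v l k)) (snd (a k)) ->
  is_lim_seq (fun l => abs2 (subS b (v l)) k) (abs2 (subS b a) k).
Proof.
  intros H1 H2.
  assert (G1 := is_lim_seq_minus' _ _ _ _ (is_lim_seq_const (fst (b k))) H1).
  assert (G2 := is_lim_seq_minus' _ _ _ _ (is_lim_seq_const (snd (b k))) H2).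
  pose proof (is_lim_seq_plus' _ _ _ _ (is_lim_seq_mult' _ _ _ _ G1 G1) (is_lim_seq_mult' _ _ _ _ G2 G2)) as G.
  eapply is_lim_seq_ext; [|replace (abs2 (subS b a) k) with
    ((fst (b k) - fst (a k)) * (fst (b k) - fst (a k)) + (snd (b k) - snd (a k)) * (snd (b k) - snd (a k)));
    [exact G|coef_ring]].
  coef_ring.
Qed.

Lemma l2_complete (u : nat -> seqC) : (forall j, inH2 (u j)) ->
  (forall eps, 0 < eps -> exists J, forall j l, (J <= j)%nat -> (J <= l)%nat ->
     norm2 (subS (u j) (u l)) <= eps) ->
  exists a, inH2 a /\ l2_cvg u a.
Proof.
  intros Hu Hc.
  assert (Hcoef : forall k, ex_lim_seq_cauchy (fun j => fst (u j k)) /\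
                            ex_lim_seq_cauchy (fun j => snd (u j k))).
  { intros k. split; intros [eps Heps]; simpl;
      destruct (Hc ((eps / 2) * (eps / 2))) as [J HJ]; try nra; exists J; intros j l Hj Hl;
      destruct (coef_abs_le_of_norm2 (subS (u j) (u l)) (eps / 2)
                  (inH2_sub _ _ (Hu j) (Hu l)) ltac:(lra) (HJ j l Hj Hl) k) as [H1 H2];
      unfold Rminus in *; coef_unfold; lra. }
  set (a := fun k => (real (Lim_seq (fun j => fst (u j k))), real (Lim_seq (fun j => snd (u j k)))) : C).
  assert (Ha1 : forall k, is_lim_seq (fun j => fst (u j k)) (fst (a k))).
  { intros k. apply Lim_seq_correct', ex_lim_seq_cauchy_corr, Hcoef. }
  assert (Ha2 : forall k, is_lim_seq (fun j => snd (u j k)) (snd (a k))).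
  { intros k. apply Lim_seq_correct', ex_lim_seq_cauchy_corr, Hcoef. }
  assert (Htail : forall eps, 0 < eps -> exists J, forall j, (J <= j)%nat ->
            inH2 (subS (u j) a) /\ norm2 (subS (u j) a) <= eps).
  { intros eps Heps. destruct (Hc eps Heps) as [J HJ]. exists J. intros j Hj.
    apply ex_series_psum_bounded; [apply abs2_nonneg|]. intros N.
    apply (is_lim_seq_le_const (fun l => psum (abs2 (subS (u j) (u (l + J)%nat))) N)).
    - intros l. eapply Rle_trans; [apply psum_le_Series; [apply inH2_sub; auto|apply abs2_nonneg]|].
      apply HJ; lia.
    - clear HJ. induction N as [|N IH]; simpl; [apply is_lim_seq_const|].
      apply is_lim_seq_plus'; [exact IH|]. apply is_lim_seq_abs2_sub.
      + exact (proj1 (is_lim_seq_incr_n (fun l => fst (u l N)) J _) (Ha1 N)).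
      + exact (proj1 (is_lim_seq_incr_n (fun l => snd (u l N)) J _) (Ha2 N)). }
  destruct (Htail 1 Rlt_0_1) as [J1 HJ1]. destruct (HJ1 J1 (le_n _)) as [Hh _].
  exists a. split.
  - apply (inH2_ext (subS (u J1) (subS (u J1) a))); [coef_ring|]. apply inH2_sub; auto.
  - apply is_lim_seq_Reals. intros eps Heps.
    destruct (Htail (eps / 2)) as [J HJ]; [lra|]. exists J. intros j Hj. destruct (HJ j Hj) as [H1 H2].
    unfold R_dist. pose proof (norm2_nonneg _ H1). rewrite Rminus_0_r, Rabs_pos_eq; lra.
Qed.

Section ClosedSubspace.

Variable X : seqC -> Prop.
Hypothesis HX : closed_subspace X.

Lemma cs_inH2 a : X a -> inH2 a.
Proof. apply HX. Qed.

Lemma cs_zero : X zeroC.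
Proof. apply HX. Qed.

Lemma cs_add a b : X a -> X b -> X (addS a b).
Proof. apply HX. Qed.

Lemma cs_scale c a : X a -> X (scaleS c a).
Proof. apply HX. Qed.

Lemma cs_imul a : X a -> X (imul a).
Proof. apply cs_scale. Qed.

Lemma cs_sub a b : X a -> X b -> X (subS a b).
Proof.
  intros Ha Hb. replace (subS a b) with (addS a (scaleS (RtoC (-1)) b)) by seq_ring.
  auto using cs_add, cs_scale.
Qed.

Lemma cs_lim u a : (forall j, X (u j)) -> inH2 a -> l2_cvg u a -> X a.
Proof.
  intros Hu Ha Hc. apply (proj2 (proj2 (proj2 (proj2 HX))) u a Hu Ha).
  apply l2_cvg_h2norm; auto. intros j. apply inH2_sub; auto using cs_inH2.
Qed.

Lemma minimizing_sequence x : inH2 x -> exists d (ys : nat -> seqC), 0 <= d /\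
  (forall y, X y -> d <= norm2 (subS x y)) /\
  (forall j, X (ys j) /\ norm2 (subS x (ys j)) < d + / INR (S j)).
Proof.
  intros Hx.
  set (E := fun r => exists y, X y /\ r = - norm2 (subS x y)).
  destruct (completeness E) as [m [Hub Hlub]].
  { exists 0. intros r [y [Hy ->]].
    pose proof (norm2_nonneg _ (inH2_sub _ _ Hx (cs_inH2 _ Hy))). lra. }
  { exists (- norm2 (subS x zeroC)), zeroC. split; auto using cs_zero. }
  exists (- m).
  assert (Hseq : forall j, exists y, X y /\ norm2 (subS x y) < - m + / INR (S j)).
  { intros j. apply NNPP. intros Hn.
    assert (Hb : is_upper_bound E (m - / INR (S j))).
    { intros r [y [Hy ->]]. apply Rnot_lt_le. intros Hlt. apply Hn. exists y. split; auto. lra. }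
    apply Hlub in Hb. pose proof (inv_S_pos j). lra. }
  destruct (choice _ Hseq) as [ys Hys]. exists ys. split; [|split; auto].
  { assert (H0 : is_upper_bound E 0).
    { intros r [y [Hy ->]]. pose proof (norm2_nonneg _ (inH2_sub _ _ Hx (cs_inH2 _ Hy))). lra. }
    apply Hlub in H0. lra. }
  intros y Hy. assert (Hr : E (- norm2 (subS x y))) by (exists y; auto).
  apply Hub in Hr. lra.
Qed.

Lemma h2norm_triangle a b : inH2 a -> inH2 b -> h2norm (addS a b) <= h2norm a + h2norm b.
Proof.
  intros Ha Hb. rewrite !h2norm_sqrt.
  pose proof (Cauchy_Schwarz_abs a b Ha Hb). rewrite !h2norm_sqrt in H.
  pose proof (norm2_nonneg a Ha). pose proof (norm2_nonneg b Hb).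
  rewrite <- (sqrt_Rsqr (sqrt (norm2 a) + sqrt (norm2 b))) by (pose proof (sqrt_pos (norm2 a)); pose proof (sqrt_pos (norm2 b)); lra).
  apply sqrt_le_1_alt. rewrite norm2_add by auto. unfold Rsqr.
  pose proof (sqrt_sqrt (norm2 a) ltac:(lra)). pose proof (sqrt_sqrt (norm2 b) ltac:(lra)).
  pose proof (Rle_abs (rinner a b)). nra.
Qed.

Lemma closest_point x : inH2 x ->
  exists p, X p /\ forall y, X y -> norm2 (subS x p) <= norm2 (subS x y).
Proof.
  intros Hx. destruct (minimizing_sequence x Hx) as [d [ys [Hd0 [Hd Hys]]]].
  assert (Hys2 : forall j, inH2 (ys j)) by (intros j; apply cs_inH2, Hys).
  (* the parallelogram law applied to x - ys j and x - ys k, whose midpoint lies in X *)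
  assert (Hcauchy : forall j k, norm2 (subS (ys j) (ys k)) <= 2 * / INR (S j) + 2 * / INR (S k)).
  { intros j k. destruct (Hys j) as [Xj Dj], (Hys k) as [Xk Dk].
    pose proof (Hd (scaleS (RtoC (/ 2)) (addS (ys j) (ys k))) (cs_scale _ _ (cs_add _ _ Xj Xk))) as Hm.
    rewrite (norm2_ext _ (scaleS (RtoC (/ 2)) (addS (subS x (ys j)) (subS x (ys k))))) in Hm
      by (intros; coef_unfold; field).
    rewrite norm2_real, norm2_add in Hm by auto using inH2_sub.
    rewrite (norm2_ext _ (subS (subS x (ys k)) (subS x (ys j)))) by coef_ring.
    rewrite norm2_sub by auto using inH2_sub. rewrite rinner_sym. lra. }
  destruct (l2_complete ys Hys2) as [p [Hp Hcvg]].
  { intros eps Heps. pose proof is_lim_seq_inv_S as Hl. apply is_lim_seq_Reals in Hl.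
    destruct (Hl (eps / 4)) as [J HJ]; [lra|]. exists J. intros j k Hj Hk.
    pose proof (HJ j Hj). pose proof (HJ k Hk). unfold R_dist in *. rewrite Rminus_0_r in *.
    rewrite Rabs_pos_eq in * by (left; apply inv_S_pos). pose proof (Hcauchy j k). lra. }
  exists p. split; [apply (cs_lim ys); auto; apply Hys|].
  intros y Hy. eapply Rle_trans; [|apply Hd; auto].
  assert (Hlim : h2norm (subS x p) <= sqrt d).
  { apply (is_lim_seq_ge_const (fun j => sqrt (d + / INR (S j)) + h2norm (subS (ys j) p))).
    - intros j.
      replace (subS x p) with (addS (subS x (ys j)) (subS (ys j) p)) by seq_ring.
      eapply Rle_trans; [apply h2norm_triangle; auto using inH2_sub|].
      apply Rplus_le_compat_r. apply sqrt_le_1_alt. left. apply Hys.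
    - rewrite <- (Rplus_0_r (sqrt d)). apply is_lim_seq_plus'.
      + apply (is_lim_seq_continuous sqrt (fun j => d + / INR (S j))).
        * apply continuity_pt_sqrt. exact Hd0.
        * rewrite <- (Rplus_0_r d) at 1. apply is_lim_seq_plus'; [apply is_lim_seq_const|apply is_lim_seq_inv_S].
      + apply (l2_cvg_h2norm ys p); auto. intros j. apply inH2_sub; auto. }
  pose proof (norm2_nonneg _ (inH2_sub _ _ Hx Hp)).
  rewrite h2norm_sqrt in Hlim. apply sqrt_le_0 in Hlim; auto.
Qed.

Lemma orth_projection x : inH2 x ->
  exists p, X p /\ forall y, X y -> rinner (subS x p) y = 0.
Proof.
  intros Hx. destruct (closest_point x Hx) as [p [Hp Hmin]].
  exists p. split; auto. intros y Hy.
  assert (Hp2 := cs_inH2 _ Hp). assert (Hy2 := cs_inH2 _ Hy).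
  set (c := rinner (subS x p) y). set (Y := norm2 y).
  assert (HY : 0 <= Y) by (apply norm2_nonneg; auto).
  (* compare with the competitor p + t y, for t = c / (Y + 1) *)
  pose proof (Hmin _ (cs_add _ _ Hp (cs_scale (RtoC (c / (Y + 1))) _ Hy))) as Ht.
  replace (subS x (addS p (scaleS (RtoC (c / (Y + 1))) y)))
    with (subS (subS x p) (scaleS (RtoC (c / (Y + 1))) y)) in Ht by seq_ring.
  rewrite (norm2_sub (subS x p)), norm2_real, rinner_real_r in Ht by auto using inH2_sub, inH2_scale.
  fold c Y in Ht.
  assert (Hc : c * c * (Y + 2) <= 0).
  { apply (Rmult_le_compat_r ((Y + 1) * (Y + 1))) in Ht; [|nra].
    replace ((norm2 (subS x p) - 2 * (c / (Y + 1) * c) + c / (Y + 1) * (c / (Y + 1)) * Y) * ((Y + 1) * (Y + 1)))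
      with (norm2 (subS x p) * ((Y + 1) * (Y + 1)) - c * c * (Y + 2)) in Ht by (field; lra).
    lra. }
  nra.
Qed.

Lemma cs_coef_kernel (P : nat -> Prop) :
  closed_subspace (fun a => X a /\ forall k, P k -> a k = RtoC 0).
Proof.
  split; [|split; [|split; [|split]]].
  - intros a [Ha _]. auto using cs_inH2.
  - split; [apply cs_zero|reflexivity].
  - intros a b [Ha Za] [Hb Zb]. split; [auto using cs_add|].
    intros k Hk. unfold addS. rewrite Za, Zb by auto. apply C_ext; simpl; ring.
  - intros c a [Ha Za]. split; [auto using cs_scale|].
    intros k Hk. unfold scaleS. rewrite Za by auto. apply C_ext; simpl; ring.
  - intros u a Hu Ha Hl. assert (Hu2 : forall j, inH2 (u j)) by (intros j; apply cs_inH2, Hu).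
    assert (Hc : l2_cvg u a) by (apply l2_cvg_h2norm; auto; intros j; apply inH2_sub; auto).
    split; [apply (cs_lim u); auto; apply Hu|].
    intros k Hk. apply (l2_cvg_coef_eq0 u); auto. intros j. apply Hu, Hk.
Qed.

Lemma Mz_bshift a : a O = RtoC 0 -> Mz (bshift a) = a.
Proof. intros H. apply functional_extensionality; intros [|k]; simpl; auto. Qed.

Lemma cs_shift_image : closed_subspace (fun a => a O = RtoC 0 /\ X (bshift a)).
Proof.
  split; [|split; [|split; [|split]]].
  - intros a [Ha0 Ha]. rewrite <- (Mz_bshift a Ha0). apply inH2_Mz, cs_inH2, Ha.
  - split; [reflexivity|]. replace (bshift zeroC) with zeroC by reflexivity. apply cs_zero.
  - intros a b [Ha0 Ha] [Hb0 Hb]. split; [unfold addS; rewrite Ha0, Hb0; apply C_ext; simpl; ring|].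
    apply (cs_add _ _ Ha Hb).
  - intros c a [Ha0 Ha]. split; [unfold scaleS; rewrite Ha0; apply C_ext; simpl; ring|].
    apply (cs_scale c _ Ha).
  - intros u a Hu Ha Hl.
    assert (Hu2 : forall j, inH2 (u j)).
    { intros j. rewrite <- (Mz_bshift (u j)) by apply Hu. apply inH2_Mz, cs_inH2, Hu. }
    assert (Hc : l2_cvg u a) by (apply l2_cvg_h2norm; auto; intros j; apply inH2_sub; auto).
    split; [apply (l2_cvg_coef_eq0 u); auto; intros j; apply Hu|].
    apply (cs_lim (fun j => bshift (u j))); [intros j; apply Hu|apply inH2_bshift; auto|].
    apply (is_lim_seq_le_le (fun _ => 0) _ (fun j => norm2 (subS (u j) a))); [|apply is_lim_seq_const|exact Hc].
    intros j. assert (Hd := inH2_sub _ _ (Hu2 j) Ha).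
    change (subS (bshift (u j)) (bshift a)) with (bshift (subS (u j) a)). split; [apply norm2_nonneg, inH2_bshift, Hd|].
    unfold norm2. rewrite (Series_incr_1 (abs2 (subS (u j) a))) by exact Hd.
    change (Series (abs2 (bshift (subS (u j) a)))) with (Series (fun k => abs2 (subS (u j) a) (S k))).
    pose proof (abs2_nonneg (subS (u j) a) 0). lra.
Qed.

End ClosedSubspace.

Lemma dim_one_orth_coef_kernel X m e : closed_subspace X -> X e -> e m = RtoC 1 ->
  dim_one (fun u => X u /\ forall w, X w -> w m = RtoC 0 -> orth u w).
Proof.
  intros HX Xe em. pose proof (cs_inH2 X HX) as XH. pose proof (cs_imul X HX) as Xi.
  set (K := fun a => X a /\ forall k, k = m -> a k = RtoC 0).
  destruct (orth_projection K (cs_coef_kernel X HX _) e (cs_inH2 X HX _ Xe)) as [p [[Xp Zp] Hort]].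
  assert (HK : forall w, X w -> w m = RtoC 0 -> K w) by (intros w Xw Hw; split; auto; intros k ->; auto).
  set (f := subS e p).
  assert (Xf : X f) by (apply (cs_sub X HX); auto).
  assert (fm : f m = RtoC 1) by (unfold f, subS; rewrite em, (Zp m eq_refl); ring).
  assert (Of : forall w, X w -> w m = RtoC 0 -> orth f w).
  { intros w Xw Hw. apply orth_rinner. split; apply Hort, HK; auto.
    unfold imul, scaleS. rewrite Hw. ring. }
  exists f. split; [split; auto|split].
  - intros E. assert (Hk := f_equal (fun v => v m) E). simpl in Hk. rewrite fm in Hk.
    injection Hk as H1. lra.
  - intros u [Xu Ou]. exists (u m).
    set (v := subS u (scaleS (u m) f)).
    assert (Xv : X v) by (apply (cs_sub X HX), (cs_scale X HX); auto).
    assert (vm : v m = RtoC 0) by (unfold v, subS, scaleS; rewrite fm; ring).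
    destruct (proj1 (orth_rinner u v) (Ou v Xv vm)) as [O1 _].
    destruct (proj1 (orth_rinner f v) (Of v Xv vm)) as [O2 O3].
    assert (Hv : norm2 v <= 0).
    { rewrite <- rinner_self. unfold v at 1.
      rewrite rinner_sub_l, rinner_scale_l, rinner_imul_l, O1, O2, O3; auto using inH2_scale.
      lra. }
    apply subS_eq0, norm2_eq0; auto using inH2_sub, inH2_scale.
Qed.

Lemma dim_one_ext (W W' : seqC -> Prop) : (forall u, W u <-> W' u) -> dim_one W' -> dim_one W.
Proof.
  intros E [v [Wv [Hv Hall]]]. exists v. repeat split; auto.
  - apply E, Wv.
  - intros u Wu. apply Hall, E, Wu.
Qed.

(** * Bessel's inequality and shifted orthonormal families *)

Fixpoint orthonormal (L : list seqC) : Prop :=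
  match L with
  | [] => True
  | a :: L' => inH2 a /\ norm2 a = 1 /\ (forall b, In b L' -> rinner a b = 0) /\ orthonormal L'
  end.

Definition sumL (f : seqC -> R) (L : list seqC) : R := fold_right (fun a acc => f a + acc) 0 L.

Definition fourier_sum (x : seqC) (L : list seqC) : seqC :=
  fold_right (fun b acc => addS (scaleS (RtoC (rinner b x)) b) acc) zeroC L.

Lemma inH2_fourier_sum x L : orthonormal L -> inH2 (fourier_sum x L).
Proof.
  induction L as [|b L IH]; simpl; intros H; [apply inH2_zero|].
  destruct H as [H1 [_ [_ H4]]]. auto using inH2_add, inH2_scale.
Qed.

Lemma rinner_fourier_sum_orth x L a : orthonormal L -> inH2 a ->
  (forall b, In b L -> rinner a b = 0) -> rinner (fourier_sum x L) a = 0.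
Proof.
  induction L as [|b L IH]; simpl; intros H Ha Ho.
  - unfold rinner. rewrite <- Series_zero. apply Series_ext. coef_ring.
  - destruct H as [H1 [_ [_ H4]]].
    rewrite rinner_add_l, rinner_real_l, IH, (rinner_sym b a), Ho;
      auto using inH2_scale, inH2_fourier_sum. ring.
Qed.

Lemma Bessel x L : orthonormal L -> inH2 x -> sumL (fun b => rinner b x * rinner b x) L <= norm2 x.
Proof.
  intros HL Hx.
  enough (E : norm2 (subS x (fourier_sum x L)) = norm2 x - sumL (fun b => rinner b x * rinner b x) L)
    by (pose proof (norm2_nonneg _ (inH2_sub _ _ Hx (inH2_fourier_sum x L HL))); lra).
  induction L as [|b L IH]; simpl.
  - rewrite (norm2_ext _ x) by coef_ring. ring.
  - destruct HL as [H1 [H2 [H3 H4]]].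
    assert (Hr : inH2 (subS x (fourier_sum x L))) by (apply inH2_sub; auto using inH2_fourier_sum).
    rewrite (norm2_ext _ (subS (subS x (fourier_sum x L)) (scaleS (RtoC (rinner b x)) b))) by coef_ring.
    rewrite norm2_sub, norm2_real, IH, H2, rinner_real_r, rinner_sub_l, rinner_fourier_sum_orth,
      (rinner_sym x b); auto using inH2_scale, inH2_fourier_sum.
    ring.
Qed.

Lemma norm2_zpow k : norm2 (zpow k) = 1.
Proof.
  unfold norm2. rewrite (Series_finsupp _ (S k)); simpl.
  - rewrite psum_eq0; [unfold abs2; rewrite zpow_eq, Cmod_1; ring|].
    intros j Hj. unfold abs2. rewrite zpow_neq, Cmod_0 by lia. ring.
  - intros j Hj. unfold abs2. rewrite zpow_neq, Cmod_0 by lia. ring.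
Qed.

Lemma rinner_zpow a k : rinner a (zpow k) = fst (a k) /\ rinner a (imul (zpow k)) = snd (a k).
Proof.
  assert (Hfin : forall b, (forall j, j <> k -> b j = RtoC 0) -> rinner a b = rprod a b k).
  { intros b Hb. unfold rinner. rewrite (Series_finsupp _ (S k)); simpl.
    - rewrite psum_eq0; [ring|]. intros j Hj. unfold rprod. rewrite Hb by lia. simpl. ring.
    - intros j Hj. unfold rprod. rewrite Hb by lia. simpl. ring. }
  rewrite !Hfin.
  - unfold rprod, imul, scaleS. rewrite zpow_eq. simpl. split; ring.
  - intros j Hj. unfold imul, scaleS. rewrite zpow_neq by auto. apply C_ext; simpl; ring.
  - intros j; apply zpow_neq.
Qed.

Lemma sumL_app f L1 L2 : sumL f (L1 ++ L2) = sumL f L1 + sumL f L2.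
Proof. induction L1; simpl; [ring|]. rewrite IHL1. ring. Qed.

Lemma sumL_psum L N : sumL (fun a => psum (abs2 a) N) L = psum (fun k => sumL (fun a => abs2 a k) L) N.
Proof.
  induction L as [|a L IH]; simpl.
  - induction N; simpl; auto. rewrite <- IHN. ring.
  - rewrite IH, <- psum_plus. reflexivity.
Qed.

(* Bessel's inequality for the real-orthonormal pair z^k, i z^k bounds the mass of an
   orthonormal family in each coefficient by 2. *)
Lemma orthonormal_mass_le L N : orthonormal L -> sumL (fun a => psum (abs2 a) N) L <= 2 * INR N.
Proof.
  intros H. rewrite sumL_psum, <- psum_const. apply psum_le. intros k _.
  assert (E : sumL (fun a => abs2 a k) L
              = sumL (fun b => rinner b (zpow k) * rinner b (zpow k)) L
                + sumL (fun b => rinner b (imul (zpow k)) * rinner b (imul (zpow k))) L).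
  { induction L as [|a L IH]; simpl; [ring|]. rewrite IH by apply H.
    destruct (rinner_zpow a k) as [-> ->]. unfold abs2. rewrite Cmod2_alt. unfold Re, Im. ring. }
  rewrite E. pose proof (Bessel (zpow k) L H (inH2_zpow k)).
  pose proof (Bessel (imul (zpow k)) L H (inH2_imul _ (inH2_zpow k))).
  rewrite norm2_imul, norm2_zpow in *. lra.
Qed.

Lemma orthonormal_app L1 L2 : orthonormal L1 -> orthonormal L2 ->
  (forall a b, In a L1 -> In b L2 -> rinner a b = 0) -> orthonormal (L1 ++ L2).
Proof.
  induction L1 as [|a L1 IH]; simpl; intros H1 H2 Ho; auto.
  destruct H1 as [A1 [A2 [A3 A4]]]. repeat split; auto.
  intros b Hb. apply in_app_iff in Hb. destruct Hb; auto.
Qed.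

Lemma rinner_Mz a b : rinner (Mz a) (Mz b) = rinner a b.
Proof.
  unfold rinner. rewrite Series_incr_1_aux; [reflexivity|]. unfold rprod. simpl. ring.
Qed.

Lemma rinner_iter_Mz l j a b :
  rinner (Nat.iter l Mz a) (Nat.iter (l + j) Mz b) = rinner a (Nat.iter j Mz b).
Proof. induction l; simpl; auto. rewrite rinner_Mz; auto. Qed.

Lemma inH2_iter_Mz l a : inH2 a -> inH2 (Nat.iter l Mz a).
Proof. induction l; simpl; auto using inH2_Mz. Qed.

Lemma rinner_iter_Mz_same l a b : rinner (Nat.iter l Mz a) (Nat.iter l Mz b) = rinner a b.
Proof. pose proof (rinner_iter_Mz l 0 a b) as H. rewrite Nat.add_0_r in H. exact H. Qed.

Lemma norm2_iter_Mz l a : norm2 (Nat.iter l Mz a) = norm2 a.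
Proof. rewrite <- !rinner_self. apply rinner_iter_Mz_same. Qed.

Lemma psum_abs2_iter_Mz l N x : psum (abs2 (Nat.iter l Mz x)) (l + N) = psum (abs2 x) N.
Proof.
  induction l; [reflexivity|].
  change (psum (abs2 (Mz (Nat.iter l Mz x))) (S (l + N)) = psum (abs2 x) N).
  rewrite psum_shift, <- IHl. unfold abs2 at 1. simpl. rewrite Cmod_0. ring_simplify.
  apply psum_ext. reflexivity.
Qed.

Lemma abs2_iter_Mz_imul l x k : abs2 (Nat.iter l Mz (imul x)) k = abs2 (Nat.iter l Mz x) k.
Proof.
  revert k; induction l; intros k; simpl; [coef_ring|].
  destruct k; simpl; [reflexivity|]. apply IHl.
Qed.

Fixpoint shifted_family (bs : list seqC) (N : nat) : list seqC :=
  match N with O => [] | S N' => map (Nat.iter N' Mz) bs ++ shifted_family bs N' end.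

Lemma in_shifted_family bs N b : In b (shifted_family bs N) ->
  exists l y, (l < N)%nat /\ In y bs /\ b = Nat.iter l Mz y.
Proof.
  induction N; simpl; [contradiction|]. intros H. apply in_app_iff in H. destruct H as [H|H].
  - apply in_map_iff in H. destruct H as [y [<- Hy]]. exists N, y. auto.
  - destruct (IHN H) as [l [y [Hl [Hy ->]]]]. exists l, y. auto.
Qed.

Lemma sumL_shifted_family f bs N :
  sumL f (shifted_family bs N) = psum (fun l => sumL f (map (Nat.iter l Mz) bs)) N.
Proof. induction N; simpl; [reflexivity|]. rewrite sumL_app, IHN. ring. Qed.

Lemma orthonormal_map_iter_Mz l bs : orthonormal bs -> orthonormal (map (Nat.iter l Mz) bs).
Proof.
  induction bs as [|a bs IH]; simpl; auto. intros [H1 [H2 [H3 H4]]].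
  repeat split; auto using inH2_iter_Mz.
  - rewrite norm2_iter_Mz. exact H2.
  - intros b Hb. apply in_map_iff in Hb. destruct Hb as [y [<- Hy]].
    rewrite rinner_iter_Mz_same. auto.
Qed.

Lemma orthonormal_shifted_family bs N : orthonormal bs ->
  (forall x y j, In x bs -> In y bs -> rinner x (Nat.iter (S j) Mz y) = 0) ->
  orthonormal (shifted_family bs N).
Proof.
  intros Hbs Hw. induction N; simpl; auto.
  apply orthonormal_app; auto using orthonormal_map_iter_Mz.
  intros a b Ha Hb. apply in_map_iff in Ha. destruct Ha as [x [<- Hx]].
  destruct (in_shifted_family _ _ _ Hb) as [l [y [Hl [Hy ->]]]].
  rewrite rinner_sym. replace N with (l + S (N - S l))%nat by lia.
  rewrite rinner_iter_Mz. auto.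
Qed.

(** * Wandering subspaces of the shift *)

(* The shifts z^l e (l <= 2T, e among e1, i e1, e2, i e2) form an orthonormal family whose mass
   in the first 3T coefficients exceeds 3 per shift once T is large, against Bessel's bound 2 per
   coefficient. *)
Lemma no_shift_wandering_orthonormal_pair e1 e2 :
  orthonormal [e1; imul e1; e2; imul e2] ->
  (forall x y j, In x [e1; imul e1; e2; imul e2] -> In y [e1; imul e1; e2; imul e2] ->
     rinner x (Nat.iter (S j) Mz y) = 0) ->
  False.
Proof.
  set (bs := [e1; imul e1; e2; imul e2]). intros Hbs Hw.
  pose proof Hbs as [H1 [N1 [_ [_ [_ [_ [H2 [N2 _]]]]]]]].
  assert (Hlim : is_lim_seq (fun T => psum (abs2 e1) T + psum (abs2 e2) T) 2).
  { replace 2 with (norm2 e1 + norm2 e2) by lra. apply is_lim_seq_plus'; apply is_lim_seq_psum; auto. }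
  apply is_lim_seq_Reals in Hlim. destruct (Hlim (1 / 2)) as [T0 HT]; [lra|].
  set (T := S T0). specialize (HT T (Nat.le_succ_diag_r T0)). unfold R_dist in HT. apply Rabs_def2 in HT.
  set (N := (3 * T)%nat).
  set (level := fun l => sumL (fun a => psum (abs2 a) N) (map (Nat.iter l Mz) bs)).
  assert (Hlevel0 : forall l, 0 <= level l).
  { intros l. unfold level, sumL, bs. cbn [map fold_right].
    pose proof (fun a => psum_nonneg (abs2 a) N (abs2_nonneg a)) as Hnn.
    pose proof (Hnn (Nat.iter l Mz e1)). pose proof (Hnn (Nat.iter l Mz (imul e1))).
    pose proof (Hnn (Nat.iter l Mz e2)). pose proof (Hnn (Nat.iter l Mz (imul e2))). lra. }
  assert (Hlevel : forall l, (l < 2 * T + 1)%nat -> 3 <= level l).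
  { intros l Hl. unfold level, sumL, bs. cbn [map fold_right].
    rewrite !(psum_ext (abs2 (Nat.iter l Mz (imul _))) (abs2 (Nat.iter l Mz _)))
      by (intros; apply abs2_iter_Mz_imul).
    assert (Hmono : forall e, psum (abs2 e) T <= psum (abs2 (Nat.iter l Mz e)) N).
    { intros e. rewrite <- (psum_abs2_iter_Mz l T). apply psum_le_mono; [apply abs2_nonneg|lia]. }
    pose proof (Hmono e1). pose proof (Hmono e2). lra. }
  pose proof (psum_le _ _ _ Hlevel) as Q1. rewrite psum_const in Q1.
  pose proof (psum_le_mono level (2 * T + 1) N Hlevel0 ltac:(unfold N, T; lia)) as Q2.
  pose proof (orthonormal_mass_le _ N (orthonormal_shifted_family bs N ltac:(exact Hbs) Hw)) as Q3.
  rewrite sumL_shifted_family in Q3. fold level in Q3.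
  assert (E1 : INR (2 * T + 1) = 2 * INR T + 1) by (rewrite plus_INR, mult_INR; simpl; ring).
  assert (E2 : INR N = 3 * INR T) by (unfold N; rewrite mult_INR; simpl; ring).
  rewrite E1 in Q1. rewrite E2 in Q3. lra.
Qed.

Lemma orthonormal_complex_pair e1 e2 : inH2 e1 -> inH2 e2 -> norm2 e1 = 1 -> norm2 e2 = 1 ->
  rinner e1 e2 = 0 -> rinner e1 (imul e2) = 0 -> orthonormal [e1; imul e1; e2; imul e2].
Proof.
  intros H1 H2 N1 N2 O1 O2.
  assert (O3 : rinner (imul e1) e2 = 0) by (rewrite rinner_imul_l, O2; ring).
  assert (O4 : rinner (imul e1) (imul e2) = 0) by (rewrite rinner_imul_imul; auto).
  simpl. rewrite !norm2_imul.
  repeat split; auto using inH2_imul; intros b Hb; simpl in Hb;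
    repeat (destruct Hb as [<-|Hb]); try contradiction; auto using rinner_imul_self.
Qed.

Lemma norm2_normalize a : 0 < norm2 a -> norm2 (scaleS (RtoC (/ sqrt (norm2 a))) a) = 1.
Proof.
  intros Hp. rewrite norm2_real.
  assert (Hs : sqrt (norm2 a) * sqrt (norm2 a) = norm2 a) by (apply sqrt_sqrt; lra).
  assert (0 < sqrt (norm2 a)) by (apply sqrt_lt_R0; auto).
  rewrite <- Hs at 3. field. lra.
Qed.

Section ShiftInvariantSubspace.

Variable X : seqC -> Prop.
Hypothesis HX : closed_subspace X.
Hypothesis HXz : forall a, X a -> X (Mz a).

Lemma imul_Mz a : imul (Mz a) = Mz (imul a).
Proof. apply functional_extensionality; intros [|k]; apply C_ext; coef_ring. Qed.

Lemma wandering_Mz_iff x :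
  wandering Mz X x <-> X x /\ forall y, X y -> rinner x (Mz y) = 0.
Proof.
  split; intros [Hx Ho]; split; auto.
  - intros y Hy. apply orth_rinner, Ho, Hy.
  - intros y Hy. apply orth_rinner. rewrite imul_Mz. split; apply Ho; [exact Hy|apply cs_imul; auto].
Qed.

Lemma wandering_Mz_inH2 x : wandering Mz X x -> inH2 x.
Proof. intros [Hx _]. apply (cs_inH2 X HX x Hx). Qed.

Lemma wandering_Mz_scale c x : wandering Mz X x -> wandering Mz X (scaleS c x).
Proof.
  intros Wx. assert (Hx := wandering_Mz_inH2 x Wx).
  apply wandering_Mz_iff in Wx. destruct Wx as [Xx Ox].
  apply wandering_Mz_iff. split; [apply cs_scale; auto|]. intros y Hy.
  assert (Hy2 := cs_inH2 X HX y Hy).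
  rewrite rinner_scale_l, rinner_imul_l, imul_Mz, (Ox y Hy), (Ox (imul y) (cs_imul X HX y Hy))
    by auto using inH2_Mz. ring.
Qed.

Lemma wandering_Mz_sub x z : wandering Mz X x -> wandering Mz X z -> wandering Mz X (subS x z).
Proof.
  intros Wx Wz. assert (Hx := wandering_Mz_inH2 x Wx). assert (Hz := wandering_Mz_inH2 z Wz).
  apply wandering_Mz_iff in Wx, Wz. destruct Wx as [Xx Ox], Wz as [Xz Oz].
  apply wandering_Mz_iff. split; [apply cs_sub; auto|]. intros y Hy.
  assert (Hy2 := cs_inH2 X HX y Hy).
  rewrite rinner_sub_l, (Ox y Hy), (Oz y Hy) by auto using inH2_Mz. ring.
Qed.

Lemma wandering_Mz_orth_eq0 f r : wandering Mz X f -> wandering Mz X r -> 0 < norm2 f ->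
  rinner r f = 0 -> rinner r (imul f) = 0 -> r = zeroC.
Proof.
  intros Wf Wr Pf O1 O2.
  assert (Hf := wandering_Mz_inH2 f Wf). assert (Hr := wandering_Mz_inH2 r Wr).
  destruct (Rle_lt_dec (norm2 r) 0) as [Hz|Pr]; [apply norm2_eq0; auto|exfalso].
  set (e1 := scaleS (RtoC (/ sqrt (norm2 f))) f). set (e2 := scaleS (RtoC (/ sqrt (norm2 r))) r).
  assert (W1 : wandering Mz X e1) by (apply wandering_Mz_scale; auto).
  assert (W2 : wandering Mz X e2) by (apply wandering_Mz_scale; auto).
  apply (no_shift_wandering_orthonormal_pair e1 e2).
  - apply orthonormal_complex_pair; auto using wandering_Mz_inH2; try (apply norm2_normalize; auto).
    + unfold e1, e2. rewrite rinner_real_l, rinner_real_r, rinner_sym, O1; auto using inH2_scale. ring.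
    + unfold e1, e2. replace (imul (scaleS (RtoC (/ sqrt (norm2 r))) r))
        with (scaleS (RtoC (/ sqrt (norm2 r))) (imul r)) by seq_ring.
      rewrite rinner_real_l, rinner_real_r, rinner_sym, rinner_imul_l, O2;
        auto using inH2_scale, inH2_imul. ring.
  - intros x y j Hx Hy.
    assert (Wx : wandering Mz X x).
    { simpl in Hx. repeat (destruct Hx as [<-|Hx]); try contradiction; auto;
        apply (wandering_Mz_scale (0, 1)); auto. }
    assert (Xy : X y).
    { simpl in Hy. repeat (destruct Hy as [<-|Hy]); try contradiction;
        first [apply W1|apply W2|apply cs_imul; auto; first [apply W1|apply W2]]. }
    apply wandering_Mz_iff in Wx. apply Wx. induction j; simpl in *; auto.
Qed.

Lemma wandering_Mz_collinear f r : wandering Mz X f -> wandering Mz X r -> f <> zeroC ->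
  exists c, r = scaleS c f.
Proof.
  intros Wf Wr Hf0. assert (Hf := wandering_Mz_inH2 f Wf). assert (Hr := wandering_Mz_inH2 r Wr).
  assert (Pf : 0 < norm2 f).
  { destruct (Rle_lt_dec (norm2 f) 0) as [Hle|]; auto. exfalso. apply Hf0, norm2_eq0; auto. }
  set (c := (rinner r f / norm2 f, rinner r (imul f) / norm2 f) : C).
  exists c.
  assert (E : subS r (scaleS c f) = zeroC).
  { apply wandering_Mz_orth_eq0 with f; auto using wandering_Mz_sub, wandering_Mz_scale.
    - rewrite rinner_sub_l, rinner_scale_l, rinner_imul_l, rinner_imul_self, rinner_self
        by auto using inH2_scale.
      unfold c. simpl. field. lra.
    - rewrite rinner_sub_l, rinner_scale_l, rinner_imul_self, rinner_self, norm2_imul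
        by auto using inH2_scale, inH2_imul.
      unfold c. simpl. field. lra. }
  exact (subS_eq0 _ _ E).
Qed.

Lemma wandering_Mz_decomposition x : X x ->
  exists h, X h /\ wandering Mz X (subS x (Mz h)).
Proof.
  intros Hx. set (Z := fun a => a O = RtoC 0 /\ X (bshift a)).
  destruct (orth_projection Z (cs_shift_image X HX) x (cs_inH2 X HX x Hx)) as [p [[Hp0 Hp] Hort]].
  exists (bshift p). rewrite (Mz_bshift p Hp0). split; auto.
  apply wandering_Mz_iff. split.
  - apply cs_sub; auto. rewrite <- (Mz_bshift p Hp0). auto.
  - intros y Hy. apply Hort. split; [reflexivity|exact Hy].
Qed.

(* The wandering parts of [f] and [g] relative to [z X] are collinear, and that of [g] vanishes at [N]. *)
Lemma shift_invariant_divide N f :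
  (forall a, X a -> vanishes_below N a) -> X f -> f N <> RtoC 0 ->
  forall g, X g -> g N = RtoC 0 -> exists h, X h /\ g = Mz h.
Proof.
  intros Hord Hf HfN g Hg HgN.
  assert (HMzN : forall h, X h -> Mz h N = RtoC 0).
  { intros h Hh. destruct N as [|N']; [reflexivity|]. apply (Hord h Hh). lia. }
  destruct (wandering_Mz_decomposition f Hf) as [hf [Xhf Wf]].
  destruct (wandering_Mz_decomposition g Hg) as [hg [Xhg Wg]].
  destruct (wandering_Mz_collinear _ _ Wf Wg) as [c Hc].
  { intros E. apply HfN. assert (Hk := f_equal (fun v => v N) E). simpl in Hk.
    unfold subS, zeroC in Hk. rewrite HMzN in Hk by auto.
    replace (f N) with (Cminus (f N) (RtoC 0)) by ring. exact Hk. }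
  exists hg. split; auto.
  assert (Hc0 : c = RtoC 0).
  { assert (Hk := f_equal (fun v => v N) Hc). unfold subS, scaleS in Hk.
    rewrite HgN, !HMzN in Hk by auto.
    replace c with (Cmult (Cmult c (Cminus (f N) (RtoC 0))) (Cinv (f N))) by (field; auto).
    rewrite <- Hk. ring. }
  apply subS_eq0. rewrite Hc, Hc0. seq_ring.
Qed.

End ShiftInvariantSubspace.

(** * The perturbed shift *)

Definition trunc (T : nat) (a : seqC) : seqC := fun k => if Nat.ltb k T then a k else RtoC 0.

Lemma inH2_trunc T a : inH2 (trunc T a).
Proof.
  apply (ex_series_finsupp _ T). intros k Hk. unfold trunc.
  destruct (Nat.ltb_spec k T); [lia|]. rewrite Cmod_0. ring.
Qed.

Lemma norm2_sub_trunc T a : inH2 a -> norm2 (subS a (trunc T a)) = norm2 a - psum (abs2 a) T.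
Proof.
  intros Ha. unfold norm2.
  rewrite (Series_ext _ (fun k => abs2 a k - abs2 (trunc T a) k)).
  - rewrite Series_minus; [f_equal|exact Ha|apply inH2_trunc].
    rewrite (Series_finsupp _ T).
    + apply psum_ext. intros k Hk. unfold abs2, trunc. destruct (Nat.ltb_spec k T); auto; lia.
    + intros k Hk. unfold abs2, trunc. destruct (Nat.ltb_spec k T); [lia|]. rewrite Cmod_0. ring.
  - intros k. unfold abs2, subS, trunc. cbv beta. destruct (Nat.ltb_spec k T); coef_ring.
Qed.

Definition subdiag (F : seqC -> seqC) (m : nat) : C := Cplus (RtoC 1) (F (zpow m) (S m)).

Section Perturbation.

Variables (n : nat) (F : seqC -> seqC).
Hypothesis HF : n_perturbation n F.

Local Notation Sn := (opadd Mz F).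

Lemma F_inH2 a : inH2 a -> inH2 (F a).
Proof. apply HF. Qed.

Lemma F_add a b : inH2 a -> inH2 b -> F (addS a b) = addS (F a) (F b).
Proof. apply HF. Qed.

Lemma F_scale c a : inH2 a -> F (scaleS c a) = scaleS c (F a).
Proof. apply HF. Qed.

Lemma F_zpow m : (n <= m)%nat -> F (zpow m) = zeroC.
Proof. apply HF. Qed.

Lemma F_vanish_low m a : inH2 a -> vanishes_below m a -> vanishes_below (S m) (F a).
Proof. intros Ha Hz k Hk. apply (proj1 (proj1 (proj2 (proj2 HF)) m a (conj Ha Hz))). lia. Qed.

Lemma Sn_injective a b : inH2 a -> inH2 b -> Sn a = Sn b -> a = b.
Proof.
  destruct HF as [_ [_ [_ [L [_ HL]]]]]. intros Ha Hb E.
  rewrite <- (HL a Ha), <- (HL b Hb), E. reflexivity.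
Qed.

Lemma F_norm2_bound : exists K, 0 <= K /\ forall a, inH2 a -> norm2 (F a) <= K * norm2 a.
Proof.
  destruct HF as [[_ [_ [_ [K [K0 HK]]]]] _]. exists (K * K). split; [nra|].
  intros a Ha. pose proof (HK a Ha) as Hb. rewrite !h2norm_sqrt in Hb.
  pose proof (norm2_nonneg _ (F_inH2 a Ha)). pose proof (norm2_nonneg _ Ha).
  rewrite <- (sqrt_sqrt (norm2 (F a))), <- (sqrt_sqrt (norm2 a)) by auto.
  pose proof (sqrt_pos (norm2 (F a))). pose proof (sqrt_pos (norm2 a)). nra.
Qed.

Lemma F_zero : F zeroC = zeroC.
Proof.
  replace zeroC with (scaleS (RtoC 0) zeroC) by seq_ring.
  rewrite F_scale by apply inH2_zero. seq_ring.
Qed.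

Lemma F_sub a b : inH2 a -> inH2 b -> F (subS a b) = subS (F a) (F b).
Proof.
  intros Ha Hb. replace (subS a b) with (addS a (scaleS (RtoC (-1)) b)) by seq_ring.
  rewrite F_add, F_scale by auto using inH2_scale. seq_ring.
Qed.

Lemma Sn_inH2 a : inH2 a -> inH2 (Sn a).
Proof. intros Ha. apply inH2_add; auto using inH2_Mz, F_inH2. Qed.

Lemma Sn_add a b : inH2 a -> inH2 b -> Sn (addS a b) = addS (Sn a) (Sn b).
Proof.
  intros Ha Hb. unfold opadd. rewrite F_add by auto.
  apply functional_extensionality; intros [|k]; apply C_ext; coef_ring.
Qed.

Lemma Sn_scale c a : inH2 a -> Sn (scaleS c a) = scaleS c (Sn a).
Proof.
  intros Ha. unfold opadd. rewrite F_scale by auto.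
  apply functional_extensionality; intros [|k]; apply C_ext; coef_ring.
Qed.

Lemma Sn_sub a b : inH2 a -> inH2 b -> Sn (subS a b) = subS (Sn a) (Sn b).
Proof.
  intros Ha Hb. unfold opadd. rewrite F_sub by auto.
  apply functional_extensionality; intros [|k]; apply C_ext; coef_ring.
Qed.

(* [F] kills every polynomial truncation of [a], and it is bounded. *)
Lemma F_vanish_high N a : (n <= N)%nat -> inH2 a -> vanishes_below N a -> F a = zeroC.
Proof.
  intros HN Ha Hz.
  assert (Htrunc : forall T, F (trunc T a) = zeroC).
  { induction T as [|T IH].
    - replace (trunc 0 a) with zeroC by reflexivity. apply F_zero.
    - replace (trunc (S T) a) with (addS (trunc T a) (scaleS (a T) (zpow T))).
      + rewrite F_add, F_scale, IH by auto using inH2_trunc, inH2_scale, inH2_zpow.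
        destruct (Nat.ltb_spec T N).
        * rewrite Hz by auto. seq_ring.
        * rewrite F_zpow by lia. seq_ring.
      + apply functional_extensionality; intros k. unfold addS, trunc, scaleS, zpow.
        destruct (Nat.ltb_spec k (S T)), (Nat.ltb_spec k T), (Nat.eqb_spec k T); subst; try lia;
          apply C_ext; simpl; ring. }
  destruct F_norm2_bound as [K [K0 HK]].
  assert (Hb : forall T, norm2 (F a) <= K * (norm2 a - psum (abs2 a) T)).
  { intros T. rewrite <- norm2_sub_trunc by auto.
    replace (F a) with (F (subS a (trunc T a))); [apply HK, inH2_sub; auto using inH2_trunc|].
    rewrite F_sub, Htrunc by auto using inH2_trunc. seq_ring. }
  apply norm2_eq0; [apply F_inH2; auto|].
  replace 0 with (K * (norm2 a - norm2 a)) by ring.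
  apply (is_lim_seq_ge_const _ _ _ Hb).
  apply (is_lim_seq_scal_l _ K (Finite (norm2 a - norm2 a))).
  apply is_lim_seq_minus'; [apply is_lim_seq_const|apply is_lim_seq_psum; auto].
Qed.

Lemma Sn_eq_Mz N a : (n <= N)%nat -> inH2 a -> vanishes_below N a -> Sn a = Mz a.
Proof.
  intros HN Ha Hz. unfold opadd. rewrite (F_vanish_high N a) by auto. seq_ring.
Qed.

Lemma Sn_vanish_low m a : inH2 a -> vanishes_below m a -> vanishes_below (S m) (Sn a).
Proof.
  intros Ha Hz k Hk. unfold opadd, addS. rewrite (F_vanish_low m a Ha Hz k Hk).
  destruct k as [|k]; simpl; [apply C_ext; simpl; ring|]. rewrite Hz by lia. apply C_ext; simpl; ring.
Qed.

Lemma Sn_leading m a : inH2 a -> vanishes_below m a -> Sn a (S m) = Cmult (a m) (subdiag F m).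
Proof.
  intros Ha Hz. set (r := subS a (scaleS (a m) (zpow m))).
  assert (Hr : inH2 r) by (apply inH2_sub; auto using inH2_scale, inH2_zpow).
  assert (Zr : vanishes_below (S m) r).
  { intros k Hk. unfold r, subS, scaleS, zpow. destruct (Nat.eqb_spec k m).
    - subst. apply C_ext; simpl; ring.
    - rewrite Hz by lia. apply C_ext; simpl; ring. }
  replace a with (addS (scaleS (a m) (zpow m)) r) at 1 by seq_ring.
  unfold opadd. rewrite F_add, F_scale by auto using inH2_scale, inH2_zpow.
  unfold addS, scaleS. rewrite (F_vanish_low (S m) r Hr Zr (S m)) by lia.
  unfold subdiag. simpl. rewrite zpow_eq, (Zr m) by lia. ring.
Qed.

(* If the subdiagonal entry at [k] vanished, solving the triangular system above [k] would give an
   [x] of order [k] with [S x] in [z^(n+1) H^2]; then [y = S x / z] has [F y = 0], so [S y = S x]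
   and injectivity forces [x = y], of order [> k]. *)
Lemma subdiag_neq0_step k : (k < n)%nat -> (forall j, (k < j)%nat -> subdiag F j <> RtoC 0) ->
  subdiag F k <> RtoC 0.
Proof.
  intros Hk Hj Hd.
  assert (Hsolve : forall i, exists x, inH2 x /\ vanishes_below k x /\ x k = RtoC 1 /\
                     vanishes_below (k + i + 2) (Sn x)).
  { induction i as [|i [x [Hx [Zx [xk Sx]]]]].
    - exists (zpow k). repeat split; auto using inH2_zpow, vanishes_below_zpow, zpow_eq.
      intros q Hq. destruct (Nat.eq_dec q (S k)) as [->|].
      + rewrite Sn_leading, Hd by auto using inH2_zpow, vanishes_below_zpow. ring.
      + apply Sn_vanish_low with (m := k); auto using inH2_zpow, vanishes_below_zpow. lia.
    - set (l := (k + i + 1)%nat).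
      set (c := Cdiv (Sn x (S l)) (subdiag F l)).
      assert (Hl : subdiag F l <> RtoC 0) by (apply Hj; unfold l; lia).
      exists (subS x (scaleS c (zpow l))). repeat split.
      + apply inH2_sub; auto using inH2_scale, inH2_zpow.
      + intros q Hq. unfold subS, scaleS. rewrite Zx, zpow_neq by (unfold l; lia). ring.
      + unfold subS, scaleS. rewrite xk, zpow_neq by (unfold l; lia). ring.
      + intros q Hq. rewrite Sn_sub, Sn_scale by auto using inH2_scale, inH2_zpow.
        unfold subS, scaleS. destruct (Nat.eq_dec q (S l)) as [->|].
        * rewrite (Sn_leading l (zpow l)), zpow_eq by auto using inH2_zpow, vanishes_below_zpow.
          unfold c. field. auto.
        * rewrite Sx by (unfold l in *; lia).
          rewrite (Sn_vanish_low l) by (auto using inH2_zpow, vanishes_below_zpow; unfold l in *; lia). ring. }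
  destruct (Hsolve (n - S k)%nat) as [x [Hx [Zx [xk Sx]]]].
  set (y := bshift (Sn x)).
  assert (Hy : inH2 y) by (apply inH2_bshift, Sn_inH2; auto).
  assert (Zy : vanishes_below n y) by (intros q Hq; apply Sx; lia).
  assert (Exy : y = x).
  { apply Sn_injective; auto. rewrite (Sn_eq_Mz n y) by auto. apply Mz_bshift, Sx. lia. }
  assert (Hyk : y k = RtoC 0) by (apply Zy; auto).
  rewrite Exy, xk in Hyk. injection Hyk as H1. lra.
Qed.

Lemma subdiag_neq0 m : subdiag F m <> RtoC 0.
Proof.
  assert (Hdown : forall t j, (n - t <= j)%nat -> subdiag F j <> RtoC 0).
  { induction t as [|t IH]; intros j Hj.
    - unfold subdiag. rewrite F_zpow by lia. intros H. injection H as H1. lra.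
    - destruct (Compare_dec.le_lt_dec (n - t) j); auto.
      apply subdiag_neq0_step; [lia|]. intros j' Hj'. apply IH. lia. }
  apply (Hdown n). lia.
Qed.

Section InvariantSubspace.

Variable M : seqC -> Prop.
Hypothesis HM : closed_subspace M.
Hypothesis HMS : forall a, M a -> M (Sn a).
Variable m0 : nat.
Hypothesis Hm0 : forall a, M a -> vanishes_below m0 a.
Hypothesis Hlead : exists a, M a /\ a m0 <> RtoC 0.

Lemma monic_of_nonzero_coef k v : M v -> vanishes_below k v -> v k <> RtoC 0 ->
  exists e, M e /\ vanishes_below k e /\ e k = RtoC 1.
Proof.
  intros Mv Zv Hv. exists (scaleS (Cinv (v k)) v). repeat split.
  - apply cs_scale; auto.
  - intros q Hq. unfold scaleS. rewrite (Zv q Hq). ring.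
  - apply Cinv_l, Hv.
Qed.

Lemma monic_of_order k : (m0 <= k)%nat -> exists e, M e /\ vanishes_below k e /\ e k = RtoC 1.
Proof.
  intros Hk. replace k with (m0 + (k - m0))%nat by lia. induction (k - m0)%nat as [|d IH].
  - destruct Hlead as [b [Mb Hb]]. rewrite Nat.add_0_r. apply (monic_of_nonzero_coef m0 b); auto.
  - destruct IH as [e [Me [Ze ee]]]. rewrite Nat.add_succ_r.
    assert (He := cs_inH2 M HM e Me).
    apply (monic_of_nonzero_coef _ (Sn e)); auto using Sn_vanish_low.
    rewrite Sn_leading, ee by auto. rewrite Cmult_1_l. apply subdiag_neq0.
Qed.

Lemma range_high_order g : M g -> vanishes_below (S (m0 + n)) g -> exists h, M h /\ Sn h = g.
Proof.
  intros Mg Zg. set (N := (m0 + n)%nat).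
  set (Mp := fun a => M a /\ forall k, (k < N)%nat -> a k = RtoC 0).
  assert (HMp : closed_subspace Mp) by apply (cs_coef_kernel M HM).
  assert (SnMz : forall a, Mp a -> Sn a = Mz a).
  { intros a [Ma Za]. apply (Sn_eq_Mz N); [unfold N; lia|apply (cs_inH2 M HM); auto|exact Za]. }
  assert (HMpz : forall a, Mp a -> Mp (Mz a)).
  { intros a Ha. rewrite <- SnMz by auto. split; [apply HMS, Ha|].
    rewrite SnMz by auto. intros [|k] Hk; [reflexivity|]. apply Ha. lia. }
  destruct (monic_of_order N) as [f [Mf [Zf fN]]]; [unfold N; lia|].
  assert (Mpf : Mp f) by (split; auto).
  assert (Mpg : Mp g) by (split; [exact Mg|intros k Hk; apply Zg; lia]).
  assert (HfN : f N <> RtoC 0) by (rewrite fN; intros H; injection H as H1; lra).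
  destruct (shift_invariant_divide Mp HMp HMpz N f (fun a Ha => proj2 Ha) Mpf HfN g Mpg
              (Zg N (Nat.lt_succ_diag_r N))) as [h [Mph ->]].
  exists h. split; [apply Mph|]. apply SnMz, Mph.
Qed.

(* Downward elimination: the coefficient of [z^k] is removed with [S e] for a monic [e] of
   order [k - 1], whose leading coefficient is the nonzero subdiagonal entry. *)
Lemma range_from_order k g : (m0 < k)%nat -> M g -> vanishes_below k g ->
  exists h, M h /\ Sn h = g.
Proof.
  intros Hk. remember (S (m0 + n) - k)%nat as d eqn:Hd. revert k g Hk Hd.
  induction d as [|d IH]; intros k g Hk Hd Mg Zg.
  - apply range_high_order; auto. intros q Hq. apply Zg. lia.
  - destruct (monic_of_order (k - 1)) as [e [Me [Ze ee]]]; [lia|].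
    assert (He := cs_inH2 M HM e Me).
    set (v := Sn e).
    assert (Zv : vanishes_below k v).
    { replace k with (S (k - 1)) by lia. apply Sn_vanish_low; auto. }
    assert (Hvk : v k = subdiag F (k - 1)).
    { unfold v. replace k with (S (k - 1)) at 1 by lia. rewrite Sn_leading, ee by auto. ring. }
    set (c := Cdiv (g k) (v k)).
    destruct (IH (S k) (subS g (scaleS c v))) as [h' [Mh' Sh']].
    + lia.
    + lia.
    + apply cs_sub, cs_scale, HMS; auto.
    + intros q Hq. unfold subS, scaleS. destruct (Nat.eq_dec q k) as [->|].
      * unfold c. rewrite Hvk. field. apply subdiag_neq0.
      * rewrite Zg, Zv by lia. ring.
    + exists (addS h' (scaleS c e)). split; [apply cs_add, cs_scale; auto|].
      assert (Hh' := cs_inH2 M HM h' Mh').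
      rewrite Sn_add, Sn_scale, Sh' by auto using inH2_scale. fold v. seq_ring.
Qed.

Lemma range_of_coef_kernel g : M g -> g m0 = RtoC 0 -> exists h, M h /\ Sn h = g.
Proof.
  intros Mg Hg. apply (range_from_order (S m0)); auto.
  intros q Hq. destruct (Nat.eq_dec q m0) as [->|]; auto. apply (Hm0 g Mg). lia.
Qed.

Lemma wandering_Sn_iff u :
  wandering Sn M u <-> M u /\ forall w, M w -> w m0 = RtoC 0 -> orth u w.
Proof.
  split; intros [Mu Hu]; split; auto.
  - intros w Mw Hw. destruct (range_of_coef_kernel w Mw Hw) as [h [Mh <-]]. auto.
  - intros w Mw. apply Hu; auto. apply (Sn_vanish_low m0 w); [apply (cs_inH2 M HM); auto|auto|lia].
Qed.

End InvariantSubspace.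

End Perturbation.

Theorem theorem3p1 (n : nat) (F : seqC -> seqC) (M : seqC -> Prop) :
  (1 <= n)%nat ->
  n_perturbation n F ->
  closed_subspace M ->
  (exists a, M a /\ a <> zeroC) ->
  (forall a, M a -> M (opadd Mz F a)) ->
  dim_one (wandering (opadd Mz F) M).
Proof.
  (* The argument does not use [1 <= n]. *)
  intros _ HF HM Hnz HMS.
  destruct (exists_order M Hnz) as [m0 [Hm0 Hlead]].
  destruct (monic_of_order n F HF M HM HMS m0 Hm0 Hlead m0 (le_n m0)) as [e [Me [_ em0]]].
  apply (dim_one_ext _ _ (wandering_Sn_iff n F HF M HM HMS m0 Hm0 Hlead)).
  exact (dim_one_orth_coef_kernel M m0 e HM Me em0).
Qed.
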